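(* Let $\phi$ be an orientation-preserving isometry of a spin, closed, hyperbolic $2$-manifold $M=\Gamma\backslash H^2$, and let $\hat\phi$ be a lift of $\phi$ to a symmetry of a spin structure $\hat\Gamma\backslash\mathrm{SU}(1,1;\mathbb C)$ on $M$. Let $f\in\mathrm{SO}^+(2,1)$ with $\phi=f_\star$, and let $\hat f\in\mathrm{SU}(1,1;\mathbb C)$ be the lift of $f$ with $\hat\phi=\hat f_\star$. Let $P$ be an isolated fixed point of $\phi$, and let $x\in H^2$ with $\Gamma x=P$. Let $g\in\mathrm{SO}^+(2,1)$ with $ge_3=x$, and let $\hat g\in\mathrm{SU}(1,1;\mathbb C)$ be a lift of $g$. Let $\gamma$ be the unique element of $\Gamma$ such that $\gamma fx=x$, and let $\hat\gamma$ be the unique element of $\hat\Gamma$ lifting $\gamma$. Then $\hat g^{-1}\hat\gamma\hat f\hat g=\mathrm{diag}(u,\overline u)$ with $u$ a unit complex number, and $$\nu(\hat\phi,P)=\frac{1}{2\,\mathrm{Im}(u)\mathbf i}.$$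
   Context: $\mathrm{SU}(1,1;\mathbb C)=\{A\in\mathbb C(2):A^*JA=J,\ \det A=1\}$, $J=\mathrm{diag}(1,-1)$, acts on $B^2=\{z\in\mathbb C:|z|<1\}$ by $\begin{pmatrix}a&b\\c&d\end{pmatrix}\cdot z=(az+b)(cz+d)^{-1}$. Let $H^2=\{x\in\mathbb R^3:x_1^2+x_2^2-x_3^2=-1,\ x_3>0\}$ and $\zeta:B^2\to H^2$, $\zeta(z)=(2z/(1-|z|^2),(1+|z|^2)/(1-|z|^2))$ (identifying $z_1+z_2\mathbf i$ with $(z_1,z_2)$). The double covering epimorphism $\eta:\mathrm{SU}(1,1;\mathbb C)\to\mathrm{SO}^+(2,1)$ (representing $\mathrm{Spin}^+(2,1)$) is characterized by $\zeta(A\cdot z)=\eta(A)\zeta(z)$. $\Gamma\subset\mathrm{SO}^+(2,1)$ is discrete and torsion-free with $M$ closed, and $\hat\Gamma\subset\mathrm{SU}(1,1;\mathbb C)$ maps isomorphically onto $\Gamma$. Isometries $f_\star(\Gamma x)=\Gamma fx$ ($f$ normalizing $\Gamma$), symmetries $\hat f_\star(\hat\Gamma\hat h)=\hat\Gamma\hat f\hat h$ ($\hat f$ normalizing $\hat\Gamma$). $\mathrm{Spin}(2)=\eta^{-1}(\mathrm{Stab}(e_3))=\{\mathrm{diag}(u,\overline u):|u|=1\}$ with half-spin representations (Atiyah–Bott convention) $\Delta_2^+(\mathrm{diag}(u,\overline u))=\overline u$, $\Delta_2^-(\mathrm{diag}(u,\overline u))=u$. If $\hat\phi=\hat f_\star$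 and $P=\Gamma ge_3$ with $\hat g$ a lift of $g$, there is a unique $s\in\mathrm{Spin}(2)$ with $\hat\Gamma\hat f\hat g=\hat\Gamma\hat gs$, and the local contribution of the isolated fixed point $P$ to the Atiyah–Singer $G$-spin formula is $\nu(\hat\phi,P)=\dfrac{\mathrm{tr}\,\Delta_2^+(s)-\mathrm{tr}\,\Delta_2^-(s)}{|\det(I-d\phi_P)|}$. *)

From HB Require Import structures.
From mathcomp Require Import all_boot all_order all_algebra.
From mathcomp Require Import reals.
From mathcomp.real_closed Require Import complex.
Set Implicit Arguments. Unset Strict Implicit. Unset Printing Implicit Defensive.
Import Order.TTheory GRing.Theory Num.Theory.
Local Open Scope ring_scope.

Section Defs.
Variable R : realType.
Local Notation C := (complex R).

Definition diag2 (a b : C) : 'M[C]_2 :=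
  \matrix_(i < 2, j < 2) (if i == j then (if i == 0 then a else b) else 0).

Definition J2 : 'M[C]_2 := diag2 1 (-1).

Definition adjC (A : 'M[C]_2) : 'M[C]_2 := (map_mx (@conjc R) A)^T.

Definition SU11 (A : 'M[C]_2) : Prop := adjC A *m J2 *m A = J2 /\ \det A = 1.

Definition nsq (z : C) : R := complex.Re z ^+ 2 + complex.Im z ^+ 2.

Definition in_disk (z : C) : Prop := nsq z < 1.

Definition mob (A : 'M[C]_2) (z : C) : C :=
  (A 0 0 * z + A 0 1) / (A 1 0 * z + A 1 1).

Definition vec3 (a b c : R) : 'cV[R]_3 :=
  \col_(i < 3) (if i == 0 then a else if i == 1 then b else c).

Definition e3 : 'cV[R]_3 := vec3 0 0 1.

Definition zeta (z : C) : 'cV[R]_3 :=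
  vec3 (2 * complex.Re z / (1 - nsq z)) (2 * complex.Im z / (1 - nsq z))
       ((1 + nsq z) / (1 - nsq z)).

Definition J3 : 'M[R]_3 :=
  \matrix_(i < 3, j < 3) (if i == j then (if i == 2 then -1 else 1) else 0).

Definition lor (x y : 'cV[R]_3) : R := (x^T *m J3 *m y) 0 0.

Definition H2 (x : 'cV[R]_3) : Prop := lor x x = -1 /\ 0 < x 2 0.

Definition SOp21 (f : 'M[R]_3) : Prop :=
  f^T *m J3 *m f = J3 /\ \det f = 1 /\ 0 < f 2 2.

Definition subgroup_SO (G : 'M[R]_3 -> Prop) : Prop :=
  [/\ forall g, G g -> SOp21 g, G 1%:M,
      forall a b, G a -> G b -> G (a *m b) & forall a, G a -> G (invmx a)].

Definition subgroup_SU (G : 'M[C]_2 -> Prop) : Prop :=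
  [/\ forall g, G g -> SU11 g, G 1%:M,
      forall a b, G a -> G b -> G (a *m b) & forall a, G a -> G (invmx a)].

(* a subgroup of a topological group is discrete iff 1 is isolated in it *)
Definition discrete (G : 'M[R]_3 -> Prop) : Prop :=
  exists eps : R, 0 < eps /\
    forall g, G g -> (forall i j, `|g i j - (1%:M : 'M[R]_3) i j| < eps) ->
      g = 1%:M.

Definition torsion_free (G : 'M[R]_3 -> Prop) : Prop :=
  forall g n, G g -> (0 < n)%N -> g ^+ n = 1 -> g = 1.

(* M = G\H^2 is compact: every orbit meets a fixed closed hyperbolic ball
   around e3 (cosh of the hyperbolic distance from e3 to y is -lor e3 y) *)
Definition cocompact (G : 'M[R]_3 -> Prop) : Prop :=
  exists D : R, forall y, H2 y -> exists g, G g /\ - lor e3 (g *m y) <= D.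

Definition normalizes (n : nat) (K : comUnitRingType) (G : 'M[K]_n.+1 -> Prop)
  (f : 'M[K]_n.+1) : Prop :=
  forall g, G g <-> G (f *m g *m invmx f).

(* P = G x is an isolated fixed point of f_star on M = G\H^2 : near x
   (hyperbolic distance < arcosh (1+eps)), the only points y whose class
   is fixed (G f y = G y) are those with G y = G x. *)
Definition isolated_fixed (G : 'M[R]_3 -> Prop) (f : 'M[R]_3)
  (x : 'cV[R]_3) : Prop :=
  (exists g, G g /\ g *m (f *m x) = x) /\
  exists eps : R, 0 < eps /\
    forall y, H2 y -> - lor x y < 1 + eps ->
      (exists g, G g /\ g *m (f *m y) = y) ->
      exists g, G g /\ g *m y = x.

Definition Spin2 (s : 'M[C]_2) : Prop :=
  exists u : C, u * conjc u = 1 /\ s = diag2 u (conjc u).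

(* Atiyah-Bott convention: Delta^+(diag(u, conj u)) = conj u,
   Delta^-(diag(u, conj u)) = u (one-dimensional, so trace = value) *)
Definition tr_Delta_plus (s : 'M[C]_2) : C := s 1 1.
Definition tr_Delta_minus (s : 'M[C]_2) : C := s 0 0.

(* Matrix of the differential at x = g e3 of the isometry y |-> L y of H^2
   (L fixing x), acting on T_x H^2 = span(g e1, g e2), in the orthonormal
   frame (g e1, g e2): the upper-left 2x2 block of g^-1 L g. *)
Definition dmat (g L : 'M[R]_3) : 'M[R]_2 :=
  \matrix_(i < 2, j < 2) (invmx g *m L *m g) (widen_ord (isT : (2 <= 3)%N) i)
                                              (widen_ord (isT : (2 <= 3)%N) j).

Definition nu (s : 'M[C]_2) (D : 'M[R]_2) : C :=
  (tr_Delta_plus s - tr_Delta_minus s) / ((`|\det (1%:M - D)|)%:C)%C.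

End Defs.
Arguments e3 {R}.
Arguments J2 {R}.
Arguments J3 {R}.

(* The element B := ghat^-1 gammahat fhat ghat of SU(1,1) covers g^-1 gamma f g, which
   fixes e3 = zeta 0.  An element of SU(1,1) fixing 0 in the disk is diagonal, so
   B = diag(u, conj u), and eta(diag(u, conj u)) is the rotation by arg u^2 about e3.
   If s = diag(v, conj v) and fhat ghat = h ghat s with h in Gammahat, then
   ghat^-1 (gammahat h) ghat s = B, so the image of gammahat h in Gamma is conjugate
   to a rotation.  In a discrete torsion-free group such an element is trivial, since
   by the pigeonhole principle some power of a rotation is close to the identity.
   Hence s = B, d phi_P is the rotation by arg u^2, |det(I - d phi_P)| = 4 Im(u)^2
   and nu = (conj u - u) / (4 Im(u)^2) = 1 / (2 Im(u) i). *)

From HB Require Import structures.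
From mathcomp Require Import all_boot all_order all_algebra.
From mathcomp Require Import reals.
From mathcomp.real_closed Require Import complex.
From mathcomp Require Import ring lra.
Import Order.TTheory GRing.Theory Num.Theory.
Set Implicit Arguments. Unset Strict Implicit. Unset Printing Implicit Defensive.
Local Open Scope ring_scope.
Local Open Scope complex_scope.

Section ComplexComponents.
Variable R : realType.
Local Notation C := R[i].
Implicit Types x y : C.

Lemma ReD x y : complex.Re (x + y) = complex.Re x + complex.Re y.
Proof. by case: x; case: y. Qed.
Lemma ImD x y : complex.Im (x + y) = complex.Im x + complex.Im y.
Proof. by case: x; case: y. Qed.
Lemma ReN x : complex.Re (- x) = - complex.Re x. Proof. by case: x. Qed.
Lemma ImN x : complex.Im (- x) = - complex.Im x. Proof. by case: x. Qed.
Lemma ReM x y :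
  complex.Re (x * y) = complex.Re x * complex.Re y - complex.Im x * complex.Im y.
Proof. by case: x; case: y. Qed.
Lemma ImM x y :
  complex.Im (x * y) = complex.Re x * complex.Im y + complex.Im x * complex.Re y.
Proof. by case: x; case: y. Qed.
Lemma ReJ x : complex.Re (conjc x) = complex.Re x. Proof. by case: x. Qed.
Lemma ImJ x : complex.Im (conjc x) = - complex.Im x. Proof. by case: x. Qed.
Lemma Rec (k : R) : complex.Re k%:C = k. Proof. by []. Qed.
Lemma Imc (k : R) : complex.Im k%:C = 0. Proof. by []. Qed.
Lemma Re1 : complex.Re (1 : C) = 1. Proof. by []. Qed.
Lemma Im1 : complex.Im (1 : C) = 0. Proof. by []. Qed.

Definition ReImE := (ReD, ImD, ReN, ImN, ReM, ImM, ReJ, ImJ, Rec, Imc, Re1, Im1).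

Lemma complex_ReIm_inj x y :
  complex.Re x = complex.Re y -> complex.Im x = complex.Im y -> x = y.
Proof. by case: x; case: y => /= ? ? ? ? -> ->. Qed.

Lemma mulcJ_nsq x : x * conjc x = (nsq x)%:C.
Proof. by apply: complex_ReIm_inj; rewrite !ReImE /nsq; ring. Qed.

Lemma nsq_ge0 x : 0 <= nsq x.
Proof. by rewrite addr_ge0 ?sqr_ge0. Qed.

Lemma nsq_eq0 x : (nsq x == 0) = (x == 0).
Proof. by case: x => a b; rewrite /nsq paddr_eq0 ?sqr_ge0 // !sqrf_eq0 eq_complex. Qed.

Lemma nsqM x y : nsq (x * y) = nsq x * nsq y.
Proof. by rewrite /nsq !ReImE; ring. Qed.

Lemma nsq1 : nsq (1 : C) = 1.
Proof. by rewrite /nsq /= expr0n addr0 expr1n. Qed.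

Lemma nsqX x n : nsq (x ^+ n) = nsq x ^+ n.
Proof. by elim: n => [|n IH]; rewrite ?nsq1 // !exprS nsqM IH. Qed.

Lemma nsqV x : nsq x^-1 = (nsq x)^-1.
Proof.
have [->|x0] := eqVneq x 0; first by rewrite invr0 /nsq /= expr0n addr0 invr0.
have n0 : nsq x != 0 by rewrite nsq_eq0.
by apply: (mulfI n0); rewrite -nsqM mulfV // divff ?nsq1.
Qed.

Lemma unit_nsq1 x : x * conjc x = 1 -> nsq x = 1.
Proof. by rewrite mulcJ_nsq => /(congr1 (@complex.Re R)). Qed.

End ComplexComponents.

Lemma big_ord2 (V : nmodType) (F : 'I_2 -> V) : \sum_(i < 2) F i = F 0 + F 1.
Proof. by rewrite !big_ord_recl big_ord0 addr0; congr (F _ + F _); apply: val_inj. Qed.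

Lemma big_ord3 (V : nmodType) (F : 'I_3 -> V) : \sum_(i < 3) F i = F 0 + F 1 + F 2.
Proof.
by rewrite !big_ord_recl big_ord0 addr0 addrA; congr (F _ + F _ + F _); apply: val_inj.
Qed.

Lemma ord2P (i : 'I_2) : i = 0 \/ i = 1.
Proof. by case: i => [[|[|//]] ?]; [left|right]; apply: val_inj. Qed.

Lemma ord3P (i : 'I_3) : [\/ i = 0, i = 1 | i = 2].
Proof.
by case: i => [[|[|[|//]]] ?]; [apply: Or31|apply: Or32|apply: Or33]; apply: val_inj.
Qed.

Lemma mulmx2E (K : pzSemiRingType) (A B : 'M[K]_2) i j :
  (A *m B) i j = A i 0 * B 0 j + A i 1 * B 1 j.
Proof. by rewrite mxE big_ord2. Qed.

Lemma det_mx22 (K : comPzRingType) (A : 'M[K]_2) :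
  \det A = A 0 0 * A 1 1 - A 0 1 * A 1 0.
Proof.
rewrite (expand_det_row _ 0) big_ord2 /cofactor !det_mx11 !mxE /=.
have -> : lift 0 (0 : 'I_1) = 1 :> 'I_2 by apply: val_inj.
have -> : lift 1 (0 : 'I_1) = 0 :> 'I_2 by apply: val_inj.
by rewrite expr0 expr1 mul1r mulN1r mulrN.
Qed.

Section SU11.
Variable R : realType.
Local Notation C := R[i].
Implicit Types (A B K : 'M[C]_2) (u v : C).

Lemma diag2_mul (a b c d : C) : diag2 a b *m diag2 c d = diag2 (a * c) (b * d).
Proof.
apply/matrixP => i j; rewrite mulmx2E !mxE.
by case: (ord2P i) => ->; case: (ord2P j) => -> /=; rewrite ?mulr0 ?mul0r ?addr0 ?add0r.
Qed.

Lemma diag2_11 : diag2 1 1 = 1%:M :> 'M[C]_2.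
Proof.
by apply/matrixP => i j; rewrite !mxE; case: (ord2P i) => ->; case: (ord2P j) => ->.
Qed.

Lemma adjC_diag2 (a b : C) : adjC (diag2 a b) = diag2 (conjc a) (conjc b).
Proof.
apply/matrixP => i j; rewrite !mxE eq_sym.
by case: eqP => [->|_]; [case: eqP | rewrite rmorph0].
Qed.

Lemma adjCM A B : adjC (A *m B) = adjC B *m adjC A.
Proof. by rewrite /adjC map_mxM trmx_mul. Qed.

Lemma SU11_unitmx A : SU11 A -> A \in unitmx.
Proof. by case=> _ dA; rewrite unitmxE dA unitr1. Qed.

Lemma SU11_1 : SU11 (1%:M : 'M[C]_2).
Proof. by rewrite /SU11 det1 /adjC map_mx1 trmx1 mul1mx mulmx1. Qed.

Lemma SU11_mul A B : SU11 A -> SU11 B -> SU11 (A *m B).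
Proof.
move=> [hA dA] [hB dB]; split; last by rewrite det_mulmx dA dB mulr1.
by rewrite adjCM !mulmxA -(mulmxA (adjC B)) -(mulmxA (adjC B)) hA.
Qed.

Lemma SU11_inv A : SU11 A -> SU11 (invmx A).
Proof.
move=> SUA; have uA := SU11_unitmx SUA; case: SUA => hA dA.
split; last by rewrite det_inv dA invr1.
have uA' : adjC A \in unitmx by rewrite unitmxE det_tr det_map_mx dA rmorph1 unitr1.
rewrite /adjC map_invmx trmx_inv -/(adjC A).
by rewrite -[in LHS]hA !mulmxA mulVmx // mul1mx -mulmxA mulmxV // mulmx1.
Qed.

Lemma SU11_diag2 u : u * conjc u = 1 -> SU11 (diag2 u (conjc u)).
Proof.
move=> uu; split; last by rewrite det_mx22 !mxE /= mulr0 subr0.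
by rewrite adjC_diag2 conjcK !diag2_mul mulr1 [conjc u * u]mulrC uu mulrN1 mulNr uu.
Qed.

Lemma conjc_mulJ u v : conjc (u * conjc v) = conjc u * v.
Proof. by apply: complex_ReIm_inj; rewrite !ReImE; ring. Qed.

Lemma unit_mulcJ u v : u * conjc u = 1 -> v * conjc v = 1 ->
  u * conjc v * conjc (u * conjc v) = 1.
Proof. by move=> uu vv; rewrite conjc_mulJ mulrACA uu mul1r mulrC vv. Qed.

Lemma diag2_divr K u v : v * conjc v = 1 ->
  K *m diag2 v (conjc v) = diag2 u (conjc u) ->
  K = diag2 (u * conjc v) (conjc (u * conjc v)).
Proof.
move=> vv KvB; have vK : diag2 v (conjc v) *m diag2 (conjc v) v = 1%:M.
  by rewrite diag2_mul [conjc v * v]mulrC vv diag2_11.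
by rewrite -[K]mulmx1 -vK mulmxA KvB diag2_mul conjc_mulJ.
Qed.

Lemma SU11_entries A : SU11 A ->
  forall i j, conjc (A 0 i) * A 0 j - conjc (A 1 i) * A 1 j = J2 i j.
Proof.
move=> [hA _] i j; rewrite -hA !mulmx2E !mxE /=.
by rewrite mulr1 !mulr0 addr0 add0r mulrN1 mulNr.
Qed.

End SU11.

Section Mobius.
Variable R : realType.
Local Notation C := R[i].
Implicit Types (A B : 'M[C]_2) (z : C).

Lemma SU11_nsq_mob A z : SU11 A ->
  nsq (A 0 0 * z + A 0 1) - nsq (A 1 0 * z + A 1 1) = nsq z - 1.
Proof.
move=> /SU11_entries J2E.
set p := A 0 0 * z + A 0 1; set q := A 1 0 * z + A 1 1.
have : p * conjc p - q * conjc q = z * conjc z - 1.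
  transitivity (z * conjc z * J2 0 0 + z * J2 1 0 + conjc z * J2 0 1 + J2 1 1).
    by rewrite -!J2E /p /q !rmorphD !rmorphM; ring.
  by rewrite !mxE /= mulr1 !mulr0 !addr0.
by rewrite !mulcJ_nsq => /(congr1 (@complex.Re R)); rewrite !ReImE.
Qed.

Lemma mob_den_neq0 A z : SU11 A -> in_disk z -> A 1 0 * z + A 1 1 != 0.
Proof.
move=> SUA z1; rewrite -nsq_eq0 gt_eqF //.
have := SU11_nsq_mob z SUA; have := nsq_ge0 (A 0 0 * z + A 0 1).
rewrite /in_disk in z1; lra.
Qed.

Lemma in_disk_mob A z : SU11 A -> in_disk z -> in_disk (mob A z).
Proof.
move=> SUA z1; have q0 := mob_den_neq0 SUA z1.
have qpos : 0 < nsq (A 1 0 * z + A 1 1) by rewrite lt0r nsq_eq0 q0 nsq_ge0.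
rewrite /in_disk /mob nsqM nsqV ltr_pdivrMr // mul1r.
have := SU11_nsq_mob z SUA; rewrite /in_disk in z1; lra.
Qed.

Lemma mob_mul A B z : SU11 B -> in_disk z -> mob (A *m B) z = mob A (mob B z).
Proof.
move=> SUB z1; have := mob_den_neq0 SUB z1; rewrite /mob !mulmx2E.
set q := B 1 0 * z + B 1 1; set p := B 0 0 * z + B 0 1 => q0.
have -> : A 0 0 * (p / q) + A 0 1 = (A 0 0 * p + A 0 1 * q) / q by field.
have -> : A 1 0 * (p / q) + A 1 1 = (A 1 0 * p + A 1 1 * q) / q by field.
rewrite invf_div mulrA mulfVK //; congr (_ / _); rewrite /p /q; ring.
Qed.

Lemma mob1 z : mob 1%:M z = z.
Proof. by rewrite /mob !mxE /= mul1r mul0r addr0 add0r divr1. Qed.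

Lemma in_disk0 : in_disk (0 : C).
Proof. by rewrite /in_disk /nsq /= expr0n /= addr0 ltr01. Qed.

Lemma mulmx_vec3 (X : 'M[R]_3) a b c i :
  (X *m vec3 a b c) i 0 = X i 0 * a + X i 1 * b + X i 2 * c.
Proof. by rewrite mxE big_ord3 !mxE. Qed.

Lemma zeta0 : zeta (0 : C) = e3.
Proof. by rewrite /zeta /nsq /= expr0n /= !(mulr0, addr0, subr0, divr1). Qed.

Lemma zeta_eq_e3 z : in_disk z -> zeta z = e3 -> z = 0.
Proof.
rewrite /in_disk /zeta => z1 /matrixP ze3.
have d0 : 1 - nsq z != 0 by rewrite subr_eq0 gt_eqF.
move: (ze3 0 0) (ze3 1 0); rewrite !mxE /= => /eqP + /eqP.
rewrite !mulf_eq0 invr_eq0 (negPf d0) pnatr_eq0 /= !orbF => /eqP ReZ /eqP ImZ.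
by apply: complex_ReIm_inj; [rewrite ReZ | rewrite ImZ].
Qed.

Lemma eq_mx_on_zeta (X Y : 'M[R]_3) :
  (forall z, in_disk z -> X *m zeta z = Y *m zeta z) -> X = Y.
Proof.
move=> XY; apply/matrixP => i j.
have zeta_re : zeta (2^-1 +i* 0 : C) = vec3 (4 / 3) 0 (5 / 3).
  by rewrite /zeta /nsq /=; congr vec3; field.
have zeta_im : zeta (0 +i* 2^-1 : C) = vec3 0 (4 / 3) (5 / 3).
  by rewrite /zeta /nsq /=; congr vec3; field.
have d_re : in_disk (2^-1 +i* 0 : C) by rewrite /in_disk /nsq /=; lra.
have d_im : in_disk (0 +i* 2^-1 : C) by rewrite /in_disk /nsq /=; lra.
have at_pt z : in_disk z -> (X *m zeta z) i 0 = (Y *m zeta z) i 0 by move=> /XY ->.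
move: (at_pt _ in_disk0) (at_pt _ d_re) (at_pt _ d_im).
rewrite zeta0 zeta_re zeta_im /e3 !mulmx_vec3 => e0 e1 e2.
by case: (ord3P j) => ->; lra.
Qed.

End Mobius.

Arguments in_disk0 {R}.

Section Rotation.
Variable R : realType.
Local Notation C := R[i].

Definition rotm (q : C) : 'M[R]_3 := \matrix_(i < 3, j < 3)
  if i == 0 then (if j == 0 then complex.Re q else if j == 1 then - complex.Im q else 0)
  else if i == 1 then
    (if j == 0 then complex.Im q else if j == 1 then complex.Re q else 0)
  else (if j == 2 then 1 else 0).

Lemma rotmM p q : rotm p *m rotm q = rotm (p * q).
Proof.
apply/matrixP => i j; rewrite mxE big_ord3 !mxE ReM ImM.
by case: (ord3P i) => ->; case: (ord3P j) => -> /=; ring.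
Qed.

Lemma rotm1 : rotm 1 = 1%:M.
Proof.
apply/matrixP => i j; rewrite !mxE.
by case: (ord3P i) => ->; case: (ord3P j) => -> /=; rewrite ?oppr0.
Qed.

Lemma rotmX q n : rotm q ^+ n = rotm (q ^+ n).
Proof.
elim: n => [|n IH]; first by rewrite !expr0 rotm1.
by rewrite !exprS -mulmxE IH rotmM.
Qed.

Lemma zeta_rot (q z : C) : nsq q = 1 -> in_disk z -> zeta (q * z) = rotm q *m zeta z.
Proof.
rewrite /in_disk => q1 z1; have d0 : 1 - nsq z != 0 by rewrite subr_eq0 gt_eqF.
apply/matrixP => i j; rewrite (ord1 j) mulmx_vec3 /zeta nsqM q1 mul1r !mxE.
move: q1 d0; rewrite /nsq ReM ImM.
by case: (ord3P i) => -> /= q1 d0; field.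
Qed.

End Rotation.

Section EntrywiseNorm.
Variable K : numDomainType.

Definition mxnorm1 m n (A : 'M[K]_(m, n)) : K := \sum_i \sum_j `|A i j|.

Lemma mxnorm1_ge0 m n (A : 'M[K]_(m, n)) : 0 <= mxnorm1 A.
Proof. by apply: sumr_ge0 => *; apply: sumr_ge0. Qed.

Lemma ler_mxnorm1 m n (A : 'M[K]_(m, n)) i j : `|A i j| <= mxnorm1 A.
Proof.
rewrite /mxnorm1 (bigD1 i) //= (bigD1 j) //= -addrA lerDl.
by rewrite addr_ge0 ?sumr_ge0 // => *; rewrite sumr_ge0.
Qed.

Lemma mxnorm1M m n p (A : 'M[K]_(m, n)) (B : 'M[K]_(n, p)) :
  mxnorm1 (A *m B) <= mxnorm1 A * mxnorm1 B.
Proof.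
rewrite /mxnorm1 mulr_suml; apply: ler_sum => i _.
apply: (@le_trans _ _ (\sum_j \sum_k `|A i k| * `|B k j|)).
  apply: ler_sum => j _; rewrite mxE; apply: le_trans (ler_norm_sum _ _ _) _.
  by under eq_bigr do rewrite normrM.
rewrite exchange_big mulr_suml; apply: ler_sum => k _; rewrite -mulr_sumr.
apply: ler_wpM2l => //; rewrite (bigD1 k) //= lerDl.
by apply: sumr_ge0 => *; apply: sumr_ge0.
Qed.

End EntrywiseNorm.

Lemma expr_conj_mx (K : comUnitRingType) n (g X : 'M[K]_n.+1) k :
  g \in unitmx -> (g *m X *m invmx g) ^+ k = g *m X ^+ k *m invmx g.
Proof.
move=> gu; elim: k => [|k IH]; first by rewrite !expr0 mulmx1 mulmxV.
by rewrite !exprS IH -!mulmxE !mulmxA mulmxKV.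
Qed.

Section Quantization.
Variable R : archiRealFieldType.

Lemma truncn_eq_close (a b : R) : 0 <= a -> 0 <= b ->
  Num.truncn a = Num.truncn b -> `|a - b| < 1.
Proof.
move=> a0 b0 ab; move: (truncn_itv a0) (truncn_itv b0); rewrite ab.
by rewrite -addn1 natrD ltr_norml => /andP [? ?] /andP [? ?]; apply/andP; split; lra.
Qed.

Definition cell (M : nat) (x : R) : 'I_M.+1 :=
  inord (Num.truncn ((x + 1) * M%:R / 2)).

Lemma cell_close M x y : (0 < M)%N -> `|x| <= 1 -> `|y| <= 1 ->
  cell M x = cell M y -> `|x - y| < 2 / M%:R.
Proof.
move=> M0; rewrite !ler_norml => /andP [x_ge x_le] /andP [y_ge y_le].
have M0' : 0 < M%:R :> R by rewrite ltr0n.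
have scaled_ge0 (t : R) : -1 <= t -> 0 <= (t + 1) * M%:R / 2.
  by move=> t_ge; rewrite divr_ge0 // mulr_ge0 //; lra.
have truncn_leM (t : R) :
    -1 <= t -> t <= 1 -> (Num.truncn ((t + 1) * M%:R / 2) <= M)%N.
  move=> t_ge t_le; have /andP [le_t _] := truncn_itv (scaled_ge0 t t_ge).
  by rewrite -(ler_nat R); apply: le_trans le_t _; rewrite ler_pdivrMr //; nra.
move=> /(congr1 val); rewrite /= !inordK ?ltnS ?truncn_leM //.
move=> /(truncn_eq_close (scaled_ge0 x x_ge) (scaled_ge0 y y_ge)).
have -> : (x + 1) * M%:R / 2 - (y + 1) * M%:R / 2 = (x - y) * (M%:R / 2) by ring.
by rewrite normrM [`|M%:R / 2|]gtr0_norm ?divr_gt0 // ltr_pdivlMr // => ?; nra.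
Qed.

End Quantization.

Section Approximation.
Variable R : realType.
Local Notation C := R[i].

Lemma nsq1_ReIm_le1 (z : C) :
  nsq z = 1 -> `|complex.Re z| <= 1 /\ `|complex.Im z| <= 1.
Proof.
have sq_le1 (a : R) : a ^+ 2 <= 1 -> `|a| <= 1.
  by move=> a2; rewrite -(@ler_pXn2r _ 2) ?nnegrE // expr1n real_normK ?num_real.
by rewrite /nsq => z1; split; apply: sq_le1; rewrite -z1 ?lerDl ?lerDr sqr_ge0.
Qed.

Lemma nsq_lt_ReIm (z : C) d :
  `|complex.Re z| < d -> `|complex.Im z| < d -> nsq z < 2 * d ^+ 2.
Proof.
move=> Re_lt Im_lt; rewrite /nsq -(real_normK (num_real (complex.Re z))).
rewrite -(real_normK (num_real (complex.Im z))) mulr2n mulrDl mul1r.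
by rewrite ltrD // !expr2 ltr_pM.
Qed.

Lemma unit_pow_near1 (q : C) e : nsq q = 1 -> 0 < e ->
  exists2 n, (0 < n)%N & nsq (q ^+ n - 1) < e.
Proof.
move=> q1 e0; pose M := (Num.truncn (8 / e)).+1.
have M0 : 0 < M%:R :> R by rewrite ltr0n.
have M_large : 8 / e < M%:R.
  by have /andP [] := truncn_itv (ltW (divr_gt0 (ltr0n R 8) e0)).
have unit_pow k : nsq (q ^+ k) = 1 by rewrite nsqX q1 expr1n.
(* Two of the first (M + 1)^2 + 1 powers of q lie in the same cell of mesh 2 / M. *)
pose F (k : 'I_(M.+1 * M.+1).+1) :=
  (cell M (complex.Re (q ^+ k)), cell M (complex.Im (q ^+ k))).
have /injectivePn [i [j neq_ij Fij]] : ~~ injectiveb F.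
  by apply/injectiveP => /leq_card; rewrite card_prod !card_ord ltnn.
wlog lt_ij : i j neq_ij Fij / (i < j)%N.
  move=> wlog_ij; case: (ltngtP i j) => [|lt_ji|/val_inj eq_ij].
  - exact: wlog_ij.
  - by apply: (wlog_ij j i) => //; rewrite eq_sym.
  - by rewrite eq_ij eqxx in neq_ij.
exists (j - i)%N; first by rewrite subn_gt0.
have [Re_j Im_j] := nsq1_ReIm_le1 (unit_pow j).
have [Re_i Im_i] := nsq1_ReIm_le1 (unit_pow i).
case: Fij => /esym /(@cell_close _ M _ _ isT Re_j Re_i).
move=> + /esym /(@cell_close _ M _ _ isT Im_j Im_i).
rewrite -ReN -ReD -ImN -ImD => /nsq_lt_ReIm /[apply] close_ij.
have : nsq (q ^+ j - q ^+ i) < e.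
  apply: (lt_le_trans close_ij); set d := 2 / M%:R.
  have d0 : 0 < d by rewrite divr_gt0.
  have d_le2 : d <= 2 by rewrite /d ler_pdivrMr // ler_pMr // ler1n.
  have d_lt : 4 * d < e.
    by move: M_large; rewrite /d mulrA !ltr_pdivrMr // mulrC => ?; lra.
  rewrite expr2 mulrA; apply: le_trans (ler_wpM2l _ d_le2) _.
  - lra.
  - lra.
have -> : q ^+ j - q ^+ i = q ^+ i * (q ^+ (j - i) - 1).
  by rewrite mulrBr mulr1 -exprD subnKC // ltnW.
by rewrite nsqM unit_pow mul1r.
Qed.

End Approximation.

Lemma subgroup_SO_expr (R : realType) (G : 'M[R]_3 -> Prop) g n :
  subgroup_SO G -> G g -> G (g ^+ n).
Proof.
move=> [_ G1 GM _] Gg; elim: n => [|n IH]; first by rewrite expr0.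
by rewrite exprS -mulmxE; apply: GM.
Qed.

Section DiscreteRotation.
Variable R : realType.
Local Notation C := R[i].

Lemma mxnorm1_rotm_sub1 (p : C) d : 0 <= d -> nsq (p - 1) < d ^+ 2 ->
  mxnorm1 (rotm p - 1%:M) < 4 * d.
Proof.
move=> d0 pd.
have sq_lt (a : R) : a ^+ 2 < d ^+ 2 -> `|a| < d.
  by rewrite -real_normK ?num_real // ltr_pXn2r ?nnegrE.
have Re_lt : `|complex.Re p - 1| < d.
  by apply: sq_lt; apply: le_lt_trans pd; rewrite /nsq ReD ReN Re1 lerDl sqr_ge0.
have Im_lt : `|complex.Im p| < d.
  apply: sq_lt; apply: le_lt_trans pd.
  by rewrite /nsq ImD ImN Im1 subr0 lerDr sqr_ge0.
rewrite /mxnorm1 !big_ord3 !mxE /= !subr0 !normr0 !addr0 !add0r normrN.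
by rewrite subrr normr0 addr0; lra.
Qed.

Lemma discrete_torsion_free_conj_rotm (G : 'M[R]_3 -> Prop) (g : 'M[R]_3) (q : C) :
  subgroup_SO G -> discrete G -> torsion_free G -> g \in unitmx -> nsq q = 1 ->
  G (g *m rotm q *m invmx g) -> g *m rotm q *m invmx g = 1%:M.
Proof.
move=> SG [eps [eps0 isolated1]] tfG gu q1 Gk.
pose c := mxnorm1 g * mxnorm1 (invmx g).
have c0 : 0 <= c by rewrite mulr_ge0 ?mxnorm1_ge0.
pose d := eps / (4 * c + 1).
have d0 : 0 < d by rewrite divr_gt0 //; lra.
have cd : c * (4 * d) < eps.
  rewrite /d; clearbody c; rewrite !mulrA ltr_pdivrMr; nra.
have [n n0 qn] := unit_pow_near1 q1 (exprn_gt0 2 d0).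
apply: (tfG _ n) => //; have := subgroup_SO_expr n SG Gk.
rewrite expr_conj_mx // rotmX => Gkn; apply: isolated1 => // i j.
have -> : (g *m rotm (q ^+ n) *m invmx g) i j - 1%:M i j
    = (g *m (rotm (q ^+ n) - 1%:M) *m invmx g) i j.
  by rewrite mulmxBr mulmxBl mulmx1 mulmxV // !mxE.
apply: le_lt_trans (ler_mxnorm1 _ i j) _.
apply: le_lt_trans (mxnorm1M _ _) _.
apply: le_lt_trans (ler_wpM2r (mxnorm1_ge0 _) (mxnorm1M _ _)) _.
rewrite mulrAC -/c; apply: le_lt_trans cd; rewrite ler_wpM2l // ltW //.
exact: mxnorm1_rotm_sub1 (ltW d0) qn.
Qed.

End DiscreteRotation.

Section LocalContribution.
Variable R : realType.
Local Notation C := R[i].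

Lemma nu_diag2_rot (g L : 'M[R]_3) (u : C) : u * conjc u = 1 ->
  invmx g *m L *m g = rotm (u ^+ 2) ->
  nu (diag2 u (conjc u)) (dmat g L) = 1 / (2%:R * (complex.Im u)%:C * 'i).
Proof.
move=> uu gLg; have := unit_nsq1 uu; rewrite /nsq => u1.
have det_eq : `|\det (1%:M - dmat g L)| = 4 * complex.Im u ^+ 2.
  by rewrite /dmat gLg det_mx22 !mxE /= !ReImE ger0_norm; nra.
have invi : 'i^-1 = - 'i :> C by apply: mulr1_eq; rewrite mulrN -expr2 sqr_i opprK.
have sub_conj : u - conjc u = 2 * (complex.Im u)%:C * 'i := subcJ u.
rewrite /nu /tr_Delta_plus /tr_Delta_minus !mxE /= det_eq -opprB sub_conj.
set y := (complex.Im u)%:C.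
have -> : (4 * complex.Im u ^+ 2)%:C = 4 * y ^+ 2.
  by rewrite rmorphM rmorphXn rmorph_nat.
(* If Im u = 0, both sides vanish by the convention x / 0 = 0. *)
have [->|y0] := eqVneq y 0; first by rewrite !(mulr0, mul0r, expr0n, oppr0, invr0).
by rewrite mul1r !invfM invi; field.
Qed.
End LocalContribution.

Section SpinCovering.
Variable R : realType.
Local Notation C := R[i].
Variable eta : 'M[C]_2 -> 'M[R]_3.
Hypothesis eta_equivariant : forall A : 'M[C]_2, SU11 A ->
  forall z : C, in_disk z -> zeta (mob A z) = eta A *m zeta z.
Implicit Types (A B K : 'M[C]_2) (u : C).

Lemma eta_eq A M : SU11 A ->
  (forall z, in_disk z -> zeta (mob A z) = M *m zeta z) -> eta A = M.
Proof.
by move=> SUA AM; apply: eq_mx_on_zeta => z z1; rewrite -eta_equivariant ?AM.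
Qed.

Lemma eta_mul A B : SU11 A -> SU11 B -> eta (A *m B) = eta A *m eta B.
Proof.
move=> SUA SUB; apply: eta_eq => [|z z1]; first exact: SU11_mul.
have Bz1 := in_disk_mob SUB z1.
by rewrite mob_mul // !eta_equivariant // mulmxA.
Qed.

Lemma eta1 : eta 1%:M = 1%:M.
Proof. by apply: eta_eq => [|z _]; [exact: SU11_1 | rewrite mob1 mul1mx]. Qed.

Lemma eta_unitmx A : SU11 A -> eta A \in unitmx.
Proof.
move=> SUA; have := eta_mul SUA (SU11_inv SUA).
by rewrite mulmxV ?SU11_unitmx // eta1 => /esym /mulmx1_unit [].
Qed.

Lemma eta_inv A : SU11 A -> eta (invmx A) = invmx (eta A).
Proof.
move=> SUA; rewrite -[LHS](mulKmx (eta_unitmx SUA)) -eta_mul //; last exact: SU11_inv.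
by rewrite mulmxV ?SU11_unitmx // eta1 mulmx1.
Qed.

Lemma eta_diag2 u : u * conjc u = 1 -> eta (diag2 u (conjc u)) = rotm (u ^+ 2).
Proof.
move=> uu; apply: eta_eq => [|z z1]; first exact: SU11_diag2.
have Jinv : (conjc u)^-1 = u by apply: mulr1_eq; rewrite mulrC.
have -> : mob (diag2 u (conjc u)) z = u ^+ 2 * z.
  by rewrite /mob !mxE /= mul0r add0r addr0 Jinv; ring.
by rewrite zeta_rot // nsqX unit_nsq1 ?expr1n.
Qed.

Lemma SU11_fix_e3 K : SU11 K -> eta K *m e3 = e3 ->
  exists2 w, w * conjc w = 1 & K = diag2 w (conjc w).
Proof.
move=> SUK Ke3.
have K11_0 : K 1 1 != 0 by have := mob_den_neq0 SUK in_disk0; rewrite mulr0 add0r.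
have K01 : K 0 1 = 0.
  have := eta_equivariant SUK in_disk0; rewrite zeta0 Ke3.
  move=> /(zeta_eq_e3 (in_disk_mob SUK in_disk0)) /eqP.
  by rewrite /mob !mulr0 !add0r mulf_eq0 invr_eq0 (negPf K11_0) orbF => /eqP.
have := SU11_entries SUK; move: (SUK) => [_]; rewrite det_mx22.
rewrite K01 mul0r subr0 => detK J2E.
have := J2E 1 1; rewrite !mxE /= K01 rmorph0 mul0r sub0r => /oppr_inj normK11.
have := J2E 1 0; rewrite !mxE /= K01 rmorph0 mul0r sub0r => /eqP.
rewrite oppr_eq0 mulf_eq0 conjc_eq0 (negPf K11_0) /= => /eqP K10.
have K00 : K 0 0 = conjc (K 1 1) by apply: (mulIf K11_0); rewrite detK normK11.
exists (K 0 0); first by rewrite {2}K00 conjcK.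
apply/matrixP => i j; rewrite !mxE {2}K00 conjcK.
by case: (ord2P i) => ->; case: (ord2P j) => ->.
Qed.

Variables (Gamma : 'M[R]_3 -> Prop) (Gammahat : 'M[C]_2 -> Prop).
Hypotheses (Gamma_subgroup : subgroup_SO Gamma) (Gamma_discrete : discrete Gamma)
  (Gamma_torsion_free : torsion_free Gamma) (Gammahat_subgroup : subgroup_SU Gammahat)
  (eta_Gammahat : forall a, Gammahat a -> Gamma (eta a))
  (eta_Gammahat_inj : forall a b, Gammahat a -> Gammahat b -> eta a = eta b -> a = b).

Lemma Gammahat_conj_diag2 k ghat w : Gammahat k -> SU11 ghat -> w * conjc w = 1 ->
  invmx ghat *m k *m ghat = diag2 w (conjc w) -> k = 1%:M.
Proof.
move=> Gk SUg ww kD; have [_ Gh1 _ _] := Gammahat_subgroup.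
have ginv := SU11_inv SUg; have gu := SU11_unitmx SUg.
have k_conj : k = ghat *m diag2 w (conjc w) *m invmx ghat.
  by rewrite -kD !mulmxA mulmxV // mul1mx mulmxK.
have eta_k : eta k = eta ghat *m rotm (w ^+ 2) *m invmx (eta ghat).
  have SUD := SU11_diag2 ww.
  by rewrite {1}k_conj !eta_mul ?eta_inv ?eta_diag2 //; apply: SU11_mul.
have : eta k = 1%:M.
  rewrite eta_k; apply: (@discrete_torsion_free_conj_rotm _ Gamma); rewrite -?eta_k //.
  - exact: eta_unitmx.
  - by rewrite nsqX unit_nsq1 ?expr1n.
  - exact: eta_Gammahat.
by rewrite -eta1 => /eta_Gammahat_inj; apply.
Qed.

End SpinCovering.

Unset Implicit Arguments.

Theorem theorem10p1 (R : realType)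
  (eta : 'M[complex R]_2 -> 'M[R]_3)
  (Heta : forall A : 'M[complex R]_2, SU11 A ->
     forall z : complex R, in_disk z -> zeta (mob A z) = eta A *m zeta z)
  (Gamma : 'M[R]_3 -> Prop) (Gammahat : 'M[complex R]_2 -> Prop)
  (HG : subgroup_SO Gamma) (HGdisc : discrete Gamma)
  (HGtf : torsion_free Gamma) (HGcpt : cocompact Gamma)
  (HGh : subgroup_SU Gammahat)
  (Hiso_into : forall a, Gammahat a -> Gamma (eta a))
  (Hiso_inj : forall a b, Gammahat a -> Gammahat b -> eta a = eta b -> a = b)
  (Hiso_onto : forall g, Gamma g -> exists a, Gammahat a /\ eta a = g)
  (f : 'M[R]_3) (fhat : 'M[complex R]_2)
  (Hf : SOp21 f) (Hfn : normalizes Gamma f)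
  (Hfh : SU11 fhat) (Hfhn : normalizes Gammahat fhat) (Hfl : eta fhat = f)
  (x : 'cV[R]_3) (Hx : H2 x) (Hiso : isolated_fixed Gamma f x)
  (g : 'M[R]_3) (Hg : SOp21 g) (Hgx : g *m e3 = x)
  (ghat : 'M[complex R]_2) (Hgh : SU11 ghat) (Hghl : eta ghat = g)
  (gamma : 'M[R]_3) (Hgam : Gamma gamma) (Hgamx : gamma *m (f *m x) = x)
  (gammahat : 'M[complex R]_2) (Hgamh : Gammahat gammahat)
  (Hgaml : eta gammahat = gamma) :
  exists u : complex R,
    [/\ u * conjc u = 1,
        invmx ghat *m gammahat *m fhat *m ghat = diag2 u (conjc u) &
        forall s : 'M[complex R]_2, Spin2 s ->
          (exists h, Gammahat h /\ fhat *m ghat = h *m (ghat *m s)) ->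
          nu s (dmat g (gamma *m f)) = 1 / (2%:R * (complex.Im u)%:C * 'i)%C].
Proof.
have [SUh _ GhM _] := HGh.
have gu : ghat \in unitmx := SU11_unitmx Hgh.
have SU_gammahat := SUh _ Hgamh.
have SU_ginv := SU11_inv Hgh.
have SU_ginv_gam := SU11_mul SU_ginv SU_gammahat.
have SU_ginv_gam_f := SU11_mul SU_ginv_gam Hfh.
pose B := invmx ghat *m gammahat *m fhat *m ghat.
have SUB : SU11 B := SU11_mul SU_ginv_gam_f Hgh.
have etaB : eta B = invmx g *m (gamma *m f) *m g.
  by rewrite /B !(eta_mul Heta) ?(eta_inv Heta) ?Hghl ?Hgaml ?Hfl ?mulmxA.
have B_e3 : eta B *m e3 = e3.
  by rewrite etaB -!mulmxA Hgx Hgamx -Hgx mulKmx // -Hghl (eta_unitmx Heta).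
have [u uu eB] := SU11_fix_e3 Heta SUB B_e3.
exists u; split => // s [v [vv ->]] [h [Gh eh]].
pose K := invmx ghat *m (gammahat *m h) *m ghat.
have KsB : K *m diag2 v (conjc v) = B by rewrite /K /B -!mulmxA -eh.
have gh1 := Gammahat_conj_diag2 Heta HG HGdisc HGtf HGh Hiso_into Hiso_inj
  (GhM _ _ Hgamh Gh) Hgh (unit_mulcJ uu vv) (diag2_divr vv (etrans KsB eB)).
have sB : diag2 v (conjc v) = B by rewrite -KsB /K gh1 mulmx1 mulVmx // mul1mx.
rewrite sB eB; apply: (nu_diag2_rot uu).
by rewrite -etaB eB (eta_diag2 Heta).
Qed.
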